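(* Let $\mathcal{K}\subseteq\wp(\mathcal{G})$ be coherent and let $A_1,\ldots,A_n\in\mathcal{K}$ ($n\geq 1$). Suppose $B\subseteq\mathcal{G}$ is such that for each sequence $\langle g_1,\ldots,g_n\rangle\in A_1\times\cdots\times A_n$, either $0\in\mathcal{E}(\{g_1,\ldots,g_n\})$, or there is some $f\in B$ with $f\in\mathcal{E}(\{g_1,\ldots,g_n\})$. Then $B\in\mathcal{K}$.
   Context: $\Omega$ is a non-empty set and $\mathcal{G}$ is the set of bounded functions $\Omega\to\mathbb{R}$. $f\geq g$ means pointwise $\geq$; $f\gneq g$ means $f\geq g$ and $f\neq g$; $\mathcal{G}_{\gneq 0}=\{f: f\gneq 0\}$. $\mathrm{posi}(B)=\{\sum_{i=1}^m\lambda_i h_i: m\geq1,\lambda_i>0,h_i\in B\}$, and $\mathcal{E}(E):=\mathrm{posi}(E\cup\mathcal{G}_{\gneq 0})$. A set $\mathcal{K}\subseteq\wp(\mathcal{G})$ is coherent if: (K$_\emptyset$) $\emptyset\notin\mathcal{K}$; (K$_0$) if $A\in\mathcal{K}$ then $A\setminus\{0\}\in\mathcal{K}$; (K$_{\gneq0}$) if $g\in\mathcal{G}_{\gneq0}$ then $\{g\}\in\mathcal{K}$; (K$_\supseteq$) if $A\in\mathcal{K}$ and $B\supseteq A$ then $B\in\mathcal{K}$; (K$_{\mathrm{Dom}}$) if $A\in\mathcal{K}$ and for each $g\in A$, $f_g$ is a gamble with $f_g\geq g$, then $\{f_g: g\in A\}\in\mathcal{K}$; (K$_{\mathrm{Add}}$)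 if $A_1,\ldots,A_n\in\mathcal{K}$ (finitely many) and for each $\langle g_1,\ldots,g_n\rangle\in A_1\times\cdots\times A_n$, $f_{\langle g_1,\ldots,g_n\rangle}$ is some member of $\mathrm{posi}(\{g_1,\ldots,g_n\})$, then $\{f_{\langle g_1,\ldots,g_n\rangle}:\langle g_1,\ldots,g_n\rangle\in A_1\times\cdots\times A_n\}\in\mathcal{K}$. *)

From Stdlib Require Import Reals List.
From Stdlib Require Fin.
Open Scope R_scope.

Section Gambles.
Variable Omega : Type.

Definition gset := (Omega -> R) -> Prop.

Definition gbounded (f : Omega -> R) : Prop := exists M : R, forall w, Rabs (f w) <= M.

Definition zero_g : Omega -> R := fun _ => 0.

Definition gneq0 (f : Omega -> R) : Prop :=
  gbounded f /\ (forall w, 0 <= f w) /\ f <> zero_g.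

Definition posi (S : gset) : gset := fun f =>
  exists l : list (R * (Omega -> R)),
    l <> nil /\
    Forall (fun p => 0 < fst p /\ S (snd p)) l /\
    forall w, f w = fold_right (fun p acc => fst p * snd p w + acc) 0 l.

Definition Ecl (S : gset) : gset := posi (fun f => S f \/ gneq0 f).

Definition range_of {n : nat} (g : Fin.t n -> Omega -> R) : gset :=
  fun h => exists i, h = g i.

Definition coherent (K : gset -> Prop) : Prop :=
  (forall A, K A -> forall f, A f -> gbounded f) /\
  (forall A, K A -> exists f, A f) /\
  (forall A, K A -> K (fun f => A f /\ f <> zero_g)) /\
  (forall g, gneq0 g -> K (fun f => f = g)) /\
  (forall A B, K A -> (forall f, A f -> B f) -> (forall f, B f -> gbounded f) -> K B) /\
  (forall A (F : (Omega -> R) -> (Omega -> R)),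
      K A ->
      (forall g, A g -> gbounded (F g) /\ forall w, g w <= F g w) ->
      K (fun f => exists g, A g /\ f = F g)) /\
  (forall (n : nat) (As : Fin.t n -> gset)
          (F : (Fin.t n -> Omega -> R) -> (Omega -> R)),
      (forall i, K (As i)) ->
      (forall g, (forall i, As i (g i)) -> posi (range_of g) (F g)) ->
      K (fun f => exists g, (forall i, As i (g i)) /\ f = F g)).

End Gambles.

Arguments gbounded {Omega}.
Arguments zero_g {Omega}.
Arguments gneq0 {Omega}.
Arguments posi {Omega}.
Arguments Ecl {Omega}.
Arguments range_of {Omega n}.
Arguments coherent {Omega}.

(* Every element of E(S) = posi(S ∪ G⪈0) is either itself ⪈ 0 or dominates an element of posi(S),
   obtained by dropping the ⪈ 0 summands.  If B contains a gamble ⪈ 0 we are done by K_⪈0 and K_⊇.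
   Otherwise, for every selection g of the A_i, this yields h_g ∈ posi{g_1,...,g_n} lying below 0 or
   below some member of B; K_Add puts {h_g} in K, K_Dom raises each h_g to 0 or to that member of B,
   and K_0 followed by K_⊇ gives B ∈ K. *)
From Stdlib Require Import Reals.
From Stdlib Require Fin.
From Stdlib Require Import Lra List Classical ClassicalEpsilon FunctionalExtensionality.
Open Scope R_scope.

Local Notation lin_comb l w := (fold_right (fun p acc => fst p * snd p w + acc) 0 l).

Section Gambles.
Context {Omega : Type}.
Implicit Types (f h q : Omega -> R) (S : (Omega -> R) -> Prop).

Lemma gbounded_zero : gbounded (@zero_g Omega).
Proof. exists 0; intro w; unfold zero_g; rewrite Rabs_R0; lra. Qed.

Lemma zero_not_gneq0 : ~ gneq0 (@zero_g Omega).
Proof. now intros (_ & _ & Hz). Qed.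

Lemma gneq0_scale (c : R) q : 0 < c -> gneq0 q -> gneq0 (fun w => c * q w).
Proof.
  intros Hc ([M HM] & Hnn & Hnz). split; [|split].
  - exists (c * M); intro w. rewrite Rabs_mult, Rabs_pos_eq by lra.
    apply Rmult_le_compat_l; [lra | apply HM].
  - intro w; specialize (Hnn w); nra.
  - intro E; apply Hnz, functional_extensionality; intro w.
    pose proof (equal_f E w) as Ew; unfold zero_g in *.
    destruct (Rmult_integral _ _ Ew); [lra | assumption].
Qed.

Lemma gneq0_add (f g : Omega -> R) : gneq0 f -> gneq0 g -> gneq0 (fun w => f w + g w).
Proof.
  intros ([M HM] & Hf & Hfz) ([N HN] & Hg & _). split; [|split].
  - exists (M + N); intro w. eapply Rle_trans; [apply Rabs_triang|].
    specialize (HM w); specialize (HN w); lra.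
  - intro w; specialize (Hf w); specialize (Hg w); lra.
  - intro E; apply Hfz, functional_extensionality; intro w.
    pose proof (equal_f E w) as Ew; unfold zero_g in *.
    specialize (Hf w); specialize (Hg w); lra.
Qed.

Definition pos_comb_of S (l : list (R * (Omega -> R))) : Prop :=
  Forall (fun p => 0 < fst p /\ S (snd p)) l.

Lemma lin_comb_nonneg l w : pos_comb_of gneq0 l -> 0 <= lin_comb l w.
Proof.
  induction 1 as [|[c q] l [Hc (_ & Hq & _)] _ IH]; simpl in *; [lra|].
  specialize (Hq w); nra.
Qed.

Lemma lin_comb_cons_gneq0 (c : R) q l :
  0 < c -> gneq0 q -> pos_comb_of gneq0 l -> gneq0 (fun w => c * q w + lin_comb l w).
Proof.
  intros Hc Hq Hl; revert c q Hc Hq.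
  induction Hl as [|[c' q'] l [Hc' Hq'] _ IH]; intros c q Hc Hq; simpl in *.
  - replace (fun w => c * q w + 0) with (fun w => c * q w)
      by (apply functional_extensionality; intro; lra).
    now apply gneq0_scale.
  - apply (gneq0_add (fun w => c * q w)); [now apply gneq0_scale | now apply IH].
Qed.

Lemma lin_comb_split S l :
  pos_comb_of (fun f => S f \/ gneq0 f) l ->
  pos_comb_of gneq0 l \/ exists h, posi S h /\ forall w, h w <= lin_comb l w.
Proof.
  induction 1 as [|[c q] l [Hc Hq] Hl IH]; simpl in *; [left; constructor|].
  destruct IH as [Hpos | (h & (l' & Hl'nil & Hl' & Hh) & Hle)], Hq as [Sq | Gq].
  - right; exists (fun w => c * q w + 0). split.
    + exists ((c, q) :: nil); split; [congruence | split; [now repeat constructor | reflexivity]].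
    + intro w; pose proof (lin_comb_nonneg l w Hpos); lra.
  - left; now constructor.
  - right; exists (fun w => c * q w + h w). split.
    + exists ((c, q) :: l'); split; [congruence | split; [now constructor|]].
      intro w; simpl; now rewrite Hh.
    + intro w; specialize (Hle w); lra.
  - right; exists h. split; [now exists l'|].
    intro w; specialize (Hle w); destruct Gq as (_ & Hq & _); specialize (Hq w); nra.
Qed.

Lemma Ecl_gneq0_or_above_posi S f :
  Ecl S f -> gneq0 f \/ exists h, posi S h /\ forall w, h w <= f w.
Proof.
  intros (l & Hnil & Hl & Hf).
  destruct (lin_comb_split S l Hl) as [Hpos | (h & Hh & Hle)].
  - left; destruct l as [|[c q] l]; [congruence|].
    inversion Hpos as [|? ? [Hc Hq] Hrest]; subst.
    replace f with (fun w => c * q w + lin_comb l w) by (apply functional_extensionality; intro w; now rewrite Hf).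
    now apply lin_comb_cons_gneq0.
  - right; exists h; split; [assumption|]. intro w; rewrite Hf; apply Hle.
Qed.

Context {K : ((Omega -> R) -> Prop) -> Prop}.
Hypothesis HK : coherent K.

Lemma coherent_superset_gneq0 A f :
  gneq0 f -> A f -> (forall g, A g -> gbounded g) -> K A.
Proof.
  destruct HK as (_ & _ & _ & HKpos & HKsup & _).
  intros Hf Af HA. apply (HKsup (fun g => g = f)); [now apply HKpos | now intros g -> | exact HA].
Qed.

Lemma coherent_add_select n (As : Fin.t n -> (Omega -> R) -> Prop) (P : (Omega -> R) -> Prop) :
  (forall i, K (As i)) ->
  (forall g, (forall i, As i (g i)) -> exists h, posi (range_of g) h /\ P h) ->
  exists C, K C /\ forall h, C h -> P h.
Proof.
  destruct HK as (_ & _ & _ & _ & _ & _ & HKadd).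
  intros HAs Hsel.
  pose (F (g : Fin.t n -> Omega -> R) := epsilon (inhabits zero_g) (fun h => posi (range_of g) h /\ P h)).
  assert (HF : forall g, (forall i, As i (g i)) -> posi (range_of g) (F g) /\ P (F g))
    by (intros g Hg; exact (epsilon_spec _ _ (Hsel g Hg))).
  exists (fun f => exists g, (forall i, As i (g i)) /\ f = F g). split.
  - apply HKadd; [exact HAs | intros g Hg; apply HF, Hg].
  - intros h (g & Hg & ->); apply HF, Hg.
Qed.

Lemma coherent_dominated C B :
  K C -> (forall f, B f -> gbounded f) ->
  (forall h, C h -> (forall w, h w <= 0) \/ exists f, B f /\ forall w, h w <= f w) ->
  K B.
Proof.
  destruct HK as (_ & _ & HK0 & _ & HKsup & HKdom & _).
  intros KC HB HCB.
  pose (Up h := epsilon (inhabits zero_g) (fun f => (f = zero_g \/ B f) /\ forall w, h w <= f w)).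
  assert (HUp : forall h, C h -> (Up h = zero_g \/ B (Up h)) /\ forall w, h w <= Up h w).
  { intros h Ch; apply (epsilon_spec (inhabits zero_g)).
    destruct (HCB h Ch) as [Hle | (f & Bf & Hle)].
    - exists zero_g; split; [now left | exact Hle].
    - exists f; split; [now right | exact Hle]. }
  assert (KD : K (fun f => exists h, C h /\ f = Up h)).
  { apply HKdom; [exact KC|]. intros h Ch; destruct (HUp h Ch) as [[-> | HBh] Hle].
    - split; [exact gbounded_zero | exact Hle].
    - split; [exact (HB _ HBh) | exact Hle]. }
  apply (HKsup _ B (HK0 _ KD)); [|exact HB].
  intros f ((h & Ch & ->) & Hnz). now destruct (HUp h Ch) as [[|] _].
Qed.

End Gambles.

Theorem mainTheorem2 (Omega : Type) (HOmega : inhabited Omega)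
  (K : ((Omega -> R) -> Prop) -> Prop) (HK : coherent K)
  (n : nat) (Hn : (1 <= n)%nat) (As : Fin.t n -> (Omega -> R) -> Prop)
  (HAs : forall i, K (As i))
  (B : (Omega -> R) -> Prop) (HB : forall f, B f -> gbounded f)
  (Hcov : forall g : Fin.t n -> Omega -> R, (forall i, As i (g i)) ->
            Ecl (range_of g) zero_g \/ exists f, B f /\ Ecl (range_of g) f) :
  K B.
Proof.
  destruct (classic (exists f, B f /\ gneq0 f)) as [(f & Bf & Hf) | HBnopos].
  { exact (coherent_superset_gneq0 HK B f Hf Bf HB). }
  destruct (coherent_add_select HK n As
              (fun h => (forall w, h w <= 0) \/ exists f, B f /\ forall w, h w <= f w) HAs)
    as (C & KC & HCB).
  - intros g Hg. destruct (Hcov g Hg) as [H0 | (f & Bf & Hf)].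
    + destruct (Ecl_gneq0_or_above_posi _ _ H0) as [Hz | (h & Hh & Hle)];
        [now destruct (zero_not_gneq0 Hz) | now exists h; split; [|left]].
    + destruct (Ecl_gneq0_or_above_posi _ _ Hf) as [Hpos | (h & Hh & Hle)];
        [now destruct HBnopos; exists f | now exists h; split; [|right; exists f]].
  - exact (coherent_dominated HK C B KC HB HCB).
Qed.
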